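(* Let $p$ be an odd prime and $m,r$ positive integers. Then $S_{mp^r}\equiv S_{mp^{r-1}}\pmod{p^{2r}}$.
   Context: $(S_n)_{n\ge0}$ is the integer sequence defined by $S_0=1$, $S_1=4$ and $(n+1)^2S_{n+1}=4(3n^2+3n+1)S_n-32n^2S_{n-1}$ for $n\ge1$; equivalently $S_n=\sum_{k=0}^n\binom nk\binom{2k}k\binom{2n-2k}{n-k}$. *)

From mathcomp Require Import all_boot.
Set Implicit Arguments. Unset Strict Implicit. Unset Printing Implicit Defensive.

Definition S (n : nat) : nat :=
  \sum_(0 <= k < n.+1) 'C(n, k) * 'C(k.*2, k) * 'C((n - k).*2, n - k).

Lemma S0 : S 0 = 1. Proof. by rewrite /S big_nat1. Qed.

From mathcomp Require Import all_boot zify.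

(* Write S_n = sum_k T(n, k) with T(n, k) = C(n,k) C(2k,k) C(2n-2k,n-k) and put
   n = p N with p^(r-1) | N.  Whenever p does not divide k, Kummer's theorem
   yields at least two carries in every position i <= r among the three
   additions k + (n-k), k + k, (n-k) + (n-k), so p^(2r) divides T(n, k).
   For k = p a, splitting off the factors divisible by p in the factorials
   gives C(p x + p y, p x) U(0, x) = C(x + y, x) U(p y, x), where U(z, x) is
   the product of the integers of (z, z + p x] prime to p.  Pairing i with
   p x - i shows U(p y, x)^2 = U(0, x)^2 modulo p^(2t+2) when p^t divides x
   and y, and since p is odd this lifts to U(p y, x) = U(0, x).  Cancelling
   these units gives T(p N, p a) = T(N, a) modulo p^(2r), the missing
   powers of p coming again from Kummer's theorem when p^(r-1) does not
   divide a. *)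

Lemma eqn_modM d a a' b b' :
  a = a' %[mod d] -> b = b' %[mod d] -> a * b = a' * b' %[mod d].
Proof. by move=> aa' bb'; rewrite -modnMm aa' bb' modnMm. Qed.

Lemma eqn_mod_sum (I : eqType) (r : seq I) d (F G : I -> nat) :
  {in r, forall i, F i = G i %[mod d]} ->
  \sum_(i <- r) F i = \sum_(i <- r) G i %[mod d].
Proof. by move=> FG; rewrite -modn_summ (eq_big_seq _ FG) modn_summ. Qed.

Lemma eqn_mod_prod (I : eqType) (r : seq I) d (F G : I -> nat) :
  {in r, forall i, F i = G i %[mod d]} ->
  \prod_(i <- r) F i = \prod_(i <- r) G i %[mod d].
Proof.
move=> FG; rewrite big_seq [\prod_(i <- r) G i]big_seq.
apply: (big_ind2 (fun x y => x = y %[mod d])) => //; exact: eqn_modM.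
Qed.

Lemma eqn_mod_mull_dvd d e y q q' :
  d %| y -> q = q' %[mod e] -> y * q = y * q' %[mod d * e].
Proof.
case/dvdnP=> y' -> qq'; rewrite -!mulnA !(mulnCA y') -!muln_modr.
by rewrite -modnMmr qq' modnMmr.
Qed.

Lemma eqn_mod_cancel_coprime d x y q :
  coprime d q -> x * q = y * q %[mod d] -> x = y %[mod d].
Proof.
move=> cop_dq; wlog le_yx : x y / y <= x => [W|].
  by case: (leqP y x) => [/W W'|/ltnW/W W'] // /esym/W'.
move/eqP; rewrite eqn_mod_dvd ?leq_mul // -mulnBl Gauss_dvdl // => dvd_d.
by apply/eqP; rewrite eqn_mod_dvd.
Qed.

Lemma eqn_mod_sqr_cancel d a b :
  coprime d (a + b) -> a * a = b * b %[mod d] -> a = b %[mod d].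
Proof.
wlog le_ba : a b / b <= a => [W|].
  by case: (leqP b a) => [/W //|/ltnW/W W']; rewrite addnC => /W' W'' /esym/W''.
move=> cop_d /eqP; rewrite eqn_mod_dvd ?leq_mul // !mulnn subn_sqr Gauss_dvdl //.
by move=> dvd_d; apply/eqP; rewrite eqn_mod_dvd.
Qed.

Lemma eqn_mod_sqr_lift p e a b : prime p -> odd p -> coprime p b ->
  a = b %[mod p] -> a * a = b * b %[mod p ^ e] -> a = b %[mod p ^ e].
Proof.
move=> p_pr p_odd cop_pb ab; apply: eqn_mod_sqr_cancel; apply: coprimeXl.
rewrite prime_coprime // /dvdn -modnDml ab modnDml addnn -muln2 -/(dvdn p _).
rewrite Euclid_dvdM // negb_or -prime_coprime // cop_pb dvdn_prime2 //.
by apply: contraTN p_odd => /eqP->.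
Qed.

Definition carry d a b := d <= a %% d + b %% d.

Lemma logn_fact_widen p n K : prime p -> n < K ->
  logn p n`! = \sum_(1 <= i < K) n %/ p ^ i.
Proof.
move=> p_pr lt_nK; rewrite logn_fact // (big_cat_nat (ltn0Sn n) lt_nK) //=.
rewrite [X in _ + X]big_nat_cond [X in _ + X]big1 ?addn0 //.
move=> i /andP[/andP[le_ni _] _].
by rewrite divn_small // (leq_trans le_ni) // ltnW // ltn_expl // prime_gt1.
Qed.

Lemma logn_bin_carries p a b K : prime p -> a + b < K ->
  logn p 'C(a + b, a) = \sum_(1 <= i < K) carry (p ^ i) a b.
Proof.
move=> p_pr lt_abK.
have := bin_fact (leq_addr b a); rewrite addKn => /(congr1 (logn p)).
rewrite !lognM ?bin_gt0 ?leq_addr ?muln_gt0 ?fact_gt0 //.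
rewrite !(@logn_fact_widen p _ K) //; try lia.
have -> : \sum_(1 <= i < K) (a + b) %/ p ^ i = \sum_(1 <= i < K) (a %/ p ^ i)
    + \sum_(1 <= i < K) (b %/ p ^ i) + \sum_(1 <= i < K) carry (p ^ i) a b.
  by rewrite -!big_split; apply: eq_bigr => i _; rewrite divnD // expn_gt0 prime_gt0.
lia.
Qed.

(* Since (k mod d) + (j mod d) = d, one of them is at least d/2. *)
Lemma carries_ge2 d k j : 0 < d -> d %| k + j -> ~~ (d %| k) ->
  2 <= carry d k j + carry d k k + carry d j j.
Proof.
move=> d_gt0 dvd_kj ndvd_k.
have kd_gt0 : 0 < k %% d by rewrite lt0n.
have := ltn_pmod k d_gt0; have := ltn_pmod j d_gt0.
have /dvdnP[c] : d %| k %% d + j %% d by rewrite /dvdn modnDm.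
rewrite /carry; case: c => [|[|c]]; nia.
Qed.

Definition binprod a b := 'C(a + b, a) * 'C(a + a, a) * 'C(b + b, b).

Lemma dvdn_binprod p R t k j : prime p -> p ^ R %| k + j -> ~~ (p ^ t.+1 %| k) ->
  p ^ ((R - t) * 2) %| binprod k j.
Proof.
move=> p_pr dvd_kj ndvd_k.
have [le_Rt | lt_tR] := leqP R t; first by rewrite (eqP le_Rt) dvd1n.
have k_gt0 : 0 < k by rewrite lt0n; apply: contraNneq ndvd_k => ->.
have binprod_gt0 : 0 < binprod k j by rewrite !muln_gt0 !bin_gt0 !leq_addr.
rewrite pfactor_dvdn // /binprod !lognM ?muln_gt0 ?bin_gt0 ?leq_addr //.
set K := (k + j + k + j).+1.
rewrite !(@logn_bin_carries p _ _ K) //; try lia.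
rewrite -!big_split /=.
have lt_RK : R < K.
  have : p ^ R <= k + j by apply: dvdn_leq; lia.
  have : R < p ^ R by rewrite ltn_expl // prime_gt1.
  lia.
rewrite (@big_cat_nat _ _ _ t.+1) //=; last exact: ltn_trans lt_RK.
rewrite (@big_cat_nat _ _ _ R.+1 t.+1) //=; last exact: ltnW.
apply: leq_trans (leq_addl _ _); apply: leq_trans (leq_addr _ _).
rewrite -[R - t]subSS -(@sum_nat_const_nat t.+1 R.+1).
rewrite big_nat_cond [X in _ <= X]big_nat_cond.
apply: leq_sum => i /andP[/andP[lt_ti le_iR] _].
apply: carries_ge2; first by rewrite expn_gt0 prime_gt0.
  by apply: dvdn_trans dvd_kj; rewrite dvdn_exp2l.
by apply: contra ndvd_k; apply: dvdn_trans; rewrite dvdn_exp2l.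
Qed.

Lemma big_nat_pmul_split (R : Type) (idx : R) (op : Monoid.com_law idx)
    p B (F : nat -> R) : 0 < p ->
  \big[op/idx]_(0 <= i < p * B) F i.+1 =
  op (\big[op/idx]_(0 <= l < B) F (p * l.+1))
     (\big[op/idx]_(0 <= l < B) \big[op/idx]_(0 <= j < p.-1) F (p * l + j.+1)).
Proof.
move=> p_gt0; elim: B => [|B IHB]; first by rewrite muln0 !big_geq ?Monoid.mul1m.
rewrite mulnS addnC (@big_cat_nat _ _ _ (p * B)) ?leq_addr //= IHB.
have -> : \big[op/idx]_(p * B <= i < p * B + p) F i.+1 =
    op (\big[op/idx]_(0 <= j < p.-1) F (p * B + j.+1)) (F (p * B.+1)).
  rewrite -{1}[p * B]add0n big_addn addKn -{1}(prednK p_gt0) big_nat_recr //=.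
  rewrite -addSn (prednK p_gt0) -mulnS.
  by congr (op _ _); apply: eq_bigr => j _; rewrite addnC addnS.
by rewrite !big_nat_recr //= [op _ (F _)]Monoid.mulmC Monoid.mulmACA.
Qed.

Lemma ndvdn_pmulDS p a j : j < p.-1 -> ~~ (p %| p * a + j.+1).
Proof.
by rewrite ltn_predRL => lt_jp; rewrite dvdn_addr ?dvdn_mulr // gtnNdvd.
Qed.

Definition rising z n := \prod_(0 <= i < n) (z + i.+1).

Lemma fact_addn z n : (z + n)`! = z`! * rising z n.
Proof.
elim: n => [|n IHn]; first by rewrite addn0 /rising big_geq ?muln1.
by rewrite /rising big_nat_recr //= -/(rising z n) mulnA -IHn addnS factS mulnC.
Qed.

Lemma rising0 n : rising 0 n = n`!.
Proof. by have := fact_addn 0 n; rewrite fact0 mul1n add0n. Qed.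

Lemma bin_fact_rising n z : 'C(n + z, n) * n`! = rising z n.
Proof.
apply/eqP; rewrite -(eqn_pmul2r (fact_gt0 z)) -mulnA.
have := bin_fact (leq_addr z n); rewrite addKn => ->.
by rewrite addnC fact_addn mulnC.
Qed.

(* For p %| z, the factors of rising z (p * B) that are prime to p. *)
Definition punit_prod p z B :=
  \prod_(0 <= l < B) \prod_(0 <= j < p.-1) (z + (p * l + j.+1)).

Lemma rising_pmul p w B : 0 < p ->
  rising (p * w) (p * B) = p ^ B * rising w B * punit_prod p (p * w) B.
Proof.
move=> p_gt0; rewrite /rising.
rewrite (@big_nat_pmul_split _ _ _ p B (fun i => p * w + i)) // /=.
congr (_ * _); rewrite -[in p ^ B](subn0 B) -prod_nat_const_nat -big_split /=.
by apply: eq_bigr => l _; rewrite mulnDr.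
Qed.

Lemma bin_pmul p x y : 0 < p ->
  'C(p * x + p * y, p * x) * punit_prod p 0 x = 'C(x + y, x) * punit_prod p (p * y) x.
Proof.
move=> p_gt0.
have fact_px : (p * x)`! = p ^ x * x`! * punit_prod p 0 x.
  by have := rising_pmul p 0 x p_gt0; rewrite muln0 !rising0.
have := bin_fact_rising (p * x) (p * y).
rewrite rising_pmul // -bin_fact_rising fact_px => bin_px.
have px_gt0 : 0 < p ^ x * x`! by rewrite muln_gt0 expn_gt0 p_gt0 fact_gt0.
apply/eqP; rewrite -(eqn_pmul2l px_gt0); apply/eqP.
by rewrite mulnCA bin_px -!mulnA (mulnCA x`!).
Qed.

Lemma coprime_punit_prod p B : prime p -> coprime p (punit_prod p 0 B).
Proof.
move=> p_pr; rewrite prime_coprime // Euclid_dvd_prod // big_has.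
apply/hasPn => l _; rewrite Euclid_dvd_prod // big_has.
apply/hasPn => j; rewrite mem_index_iota add0n => /andP[_ lt_jp].
exact: ndvdn_pmulDS.
Qed.

Lemma punit_prod_rev p z B : 0 < p -> punit_prod p z B =
  \prod_(0 <= l < B) \prod_(0 <= j < p.-1) (z + (p * B - (p * l + j.+1))).
Proof.
move=> p_gt0; rewrite /punit_prod big_nat_rev; apply: eq_big_nat => l /andP[_ lt_lB].
rewrite big_nat_rev; apply: eq_big_nat => j /andP[_ lt_jp] /=.
have : p * l.+1 <= p * B by rewrite leq_pmul2l.
by rewrite !add0n mulnBr mulnS; lia.
Qed.

Lemma punit_prod_sqr_mod p d w B : 0 < p -> d %| w -> d %| p * B ->
  punit_prod p w B * punit_prod p w B = \prod_(0 <= l < B) \prod_(0 <= j < p.-1)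
    ((p * l + j.+1) * (p * B - (p * l + j.+1))) %[mod d ^ 2].
Proof.
move=> p_gt0 dvd_w dvd_pB; rewrite {2}punit_prod_rev // /punit_prod -big_split /=.
apply: eqn_mod_prod => l; rewrite mem_index_iota => /andP[_ lt_lB].
rewrite -big_split /=; apply: eqn_mod_prod => j.
rewrite mem_index_iota => /andP[_ lt_jp].
set i := p * l + j.+1; set M := p * B.
have le_iM : i <= M.
  have : p * l.+1 <= p * B by rewrite leq_pmul2l.
  by rewrite mulnS /i /M; lia.
have -> : (w + i) * (w + (M - i)) = i * (M - i) + w * (w + M).
  by rewrite -(subnKC le_iM) addKn; lia.
by rewrite -modnDmr (eqP (_ : d ^ 2 %| w * (w + M))) ?addn0 // dvdn_mul ?dvdn_add.
Qed.

Lemma punit_prod_congr p t y B : prime p -> odd p -> p ^ t %| y -> p ^ t %| B ->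
  punit_prod p (p * y) B = punit_prod p 0 B %[mod p ^ (t.+1 * 2)].
Proof.
move=> p_pr p_odd dvd_y dvd_B; have p_gt0 := prime_gt0 p_pr.
apply: eqn_mod_sqr_lift => //; first exact: coprime_punit_prod.
  rewrite /punit_prod; apply: eqn_mod_prod => l _; apply: eqn_mod_prod => j _.
  by rewrite -modnDml modnMr.
have dvd_py : p ^ t.+1 %| p * y by rewrite expnS dvdn_pmul2l.
have dvd_pB : p ^ t.+1 %| p * B by rewrite expnS dvdn_pmul2l.
by rewrite expnM !(@punit_prod_sqr_mod p (p ^ t.+1)) ?dvdn0.
Qed.

Lemma binprod_pmul_congr p r a b : prime p -> odd p -> p ^ r %| a + b ->
  binprod (p * a) (p * b) = binprod a b %[mod p ^ (2 * r.+1)].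
Proof.
move=> p_pr p_odd dvd_ab; have p_gt0 := prime_gt0 p_pr.
set Q := punit_prod p 0 a * punit_prod p 0 a * punit_prod p 0 b.
set Q' := punit_prod p (p * b) a * punit_prod p (p * a) a * punit_prod p (p * b) b.
have binprodQ : binprod (p * a) (p * b) * Q = binprod a b * Q'.
  rewrite /binprod mulnACA (mulnACA 'C(_, _)) !bin_pmul //.
  by rewrite [RHS]mulnACA [in RHS](mulnACA 'C(_, _)).
(* t = min (logn p a) r; when t < r the missing factor p ^ ((r - t) * 2)
   is supplied by binprod a b itself. *)
have [t [le_tr dvd_ta dvd_tb dvd_binprod_ab]] : exists t, [/\ t <= r, p ^ t %| a,
    p ^ t %| b & p ^ ((r - t) * 2) %| binprod a b].
  have [dvd_ra | ndvd_ra] := boolP (p ^ r %| a).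
    by exists r; rewrite subnn dvd1n dvd_ra -(dvdn_addr b dvd_ra) dvd_ab.
  have a_gt0 : 0 < a by rewrite lt0n; apply: contraNneq ndvd_ra => ->.
  have dvd_ta := pfactor_dvdnn p a.
  have lt_tr : logn p a < r.
    by rewrite ltnNge; apply: contra ndvd_ra => /(dvdn_exp2l p)/dvdn_trans->.
  exists (logn p a); split => //; first exact: ltnW.
    by rewrite -(dvdn_addr b dvd_ta) (dvdn_trans _ dvd_ab) // dvdn_exp2l // ltnW.
  apply: dvdn_binprod dvd_ab _ => //.
  by rewrite pfactor_dvdn // ltnn.
have QQ' : Q' = Q %[mod p ^ (t.+1 * 2)].
  by apply: eqn_modM; first apply: eqn_modM; exact: punit_prod_congr.
rewrite (_ : 2 * r.+1 = (r - t) * 2 + t.+1 * 2); last first.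
  by rewrite -mulnDl addnS subnK // mulnC.
apply: (eqn_mod_cancel_coprime _ _ _ Q).
  by apply: coprimeXl; rewrite !coprimeMr !coprime_punit_prod.
by rewrite binprodQ expnD; apply: eqn_mod_mull_dvd.
Qed.

Definition Sterm n k := 'C(n, k) * 'C(k.*2, k) * 'C((n - k).*2, n - k).

Lemma Sterm_binprod n k : k <= n -> Sterm n k = binprod k (n - k).
Proof. by move=> le_kn; rewrite /Sterm /binprod subnKC // -!addnn. Qed.

Lemma dvdn_Sterm p R n k : prime p -> p ^ R %| n -> k <= n -> ~~ (p %| k) ->
  p ^ (2 * R) %| Sterm n k.
Proof.
move=> p_pr dvd_n le_kn ndvd_k; rewrite Sterm_binprod // mulnC -[R]subn0.
by apply: dvdn_binprod; rewrite ?subnKC // expn1.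
Qed.

Lemma Sterm_pmul_congr p r n a : prime p -> odd p -> p ^ r %| n -> a <= n ->
  Sterm (p * n) (p * a) = Sterm n a %[mod p ^ (2 * r.+1)].
Proof.
move=> p_pr p_odd dvd_n le_an.
rewrite !Sterm_binprod ?leq_pmul2l ?prime_gt0 // -mulnBr.
by apply: binprod_pmul_congr; rewrite ?subnKC.
Qed.

Lemma sum_nat_pmul_split p N (F : nat -> nat) : 0 < p ->
  \sum_(0 <= k < (p * N).+1) F k = \sum_(0 <= a < N.+1) F (p * a)
    + \sum_(0 <= a < N) \sum_(0 <= j < p.-1) F (p * a + j.+1).
Proof.
move=> p_gt0; rewrite !big_nat_recl // (@big_nat_pmul_split _ _ _ p N F p_gt0) muln0 /=.
by rewrite addnA.
Qed.

Theorem mainTheorem3 (p m r : nat) :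
  prime p -> odd p -> 0 < m -> 0 < r ->
  S (m * p ^ r) = S (m * p ^ r.-1) %[mod p ^ (2 * r)].
Proof.
move=> p_pr p_odd _; case: r => [//|r] _ /=; have p_gt0 := prime_gt0 p_pr.
set N := m * p ^ r.
have -> : m * p ^ r.+1 = p * N by rewrite expnS mulnCA.
have dvd_N : p ^ r %| N by apply: dvdn_mull.
rewrite /S -/(Sterm _ _) sum_nat_pmul_split //.
rewrite -modnDmr (eqP (_ : p ^ (2 * r.+1) %| \sum_(0 <= a < N) _)) ?addn0.
  apply: eqn_mod_sum => a; rewrite mem_index_iota => /andP[_ le_aN].
  exact: Sterm_pmul_congr.
have dvd_pN : p ^ r.+1 %| p * N by rewrite expnS dvdn_pmul2l.
rewrite big_nat_cond; apply: dvdn_sum => a /andP[/andP[_ lt_aN] _].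
rewrite big_nat_cond; apply: dvdn_sum => j /andP[/andP[_ lt_jp] _].
apply: dvdn_Sterm dvd_pN _ _ => //; last exact: ndvdn_pmulDS.
have : p * a.+1 <= p * N by rewrite leq_pmul2l.
by rewrite mulnS; move: lt_jp; rewrite ltn_predRL; lia.
Qed.
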